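(* In every finite three-player extensive-form game with perfect recall, $\Xi_T=\operatorname{co}\Xi^*_{T1}=\operatorname{co}\Xi^*_{T2}=\operatorname{co}(\Xi^*_{T1}\cup\Xi^*_{T2})$, where $\operatorname{co}$ denotes convex hull.
   Context: A finite extensive-form game is played on a tree; each internal node belongs to one of the players $T1,T2,O$ or to chance. The nodes of player $i$ are partitioned into information sets $\mathcal I_i$; all nodes of $I\in\mathcal I_i$ share the action set $A_I$. Perfect recall is assumed. The sequences of player $i$ are $\Sigma_i=\{(I,a):I\in\mathcal I_i,a\in A_I\}\cup\{\varnothing\}$. For an information set $I$ of player $i$, $\sigma(I)$ denotes the last pair $(I',a')$ of player $i$ on the root-to-$I$ path, or $\varnothing$ if $i$ does not act before $I$. Two information sets $I_i\in\mathcal I_i$, $I_j\in\mathcal I_j$ are connected ($I_i\rightleftharpoons I_j$) if there exist $v\in I_i$, $w\in I_j$ such that the root-to-$v$ path passes through $w$ or vice versa. A pair $(\sigma_i,\sigma_j)$ is relevant ($\sigma_i\bowtie\sigma_j$) if one of them is $\varnothing$ or $\sigma_i=(I_i,a_i)$, $\sigma_j=(I_j,a_j)$ with $I_i\rightleftharpoons I_j$; $\Sigma_{T1}\bowtie\Sigma_{T2}$ is the set of relevant pairs. Similarly $\sigma_i\bowtie I_j$ if $\sigma_i=\varnothing$ or $\sigma_i=(I_i,a_i)$ with $I_i\rightleftharpoons I_j$. A reduced-normal-form plan of player $i$ chooses an action at every information set of $i$ that remains reachable given the plan's own choices; their set is $\Pi_i$. For $\sigma=(I,a)$, $\Pi_i(\sigma)$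 is the set of plans prescribing all of $i$'s actions on the path to $I$ and playing $a$ at $I$; $\Pi_i(\varnothing)=\Pi_i$. The map $f$ sends $\mu_T\in\Delta(\Pi_{T1}\times\Pi_{T2})$ to the vector $f(\mu_T)$ indexed by relevant pairs with $f(\mu_T)[\sigma_{T1},\sigma_{T2}]=\sum_{\pi_1\in\Pi_{T1}(\sigma_{T1}),\pi_2\in\Pi_{T2}(\sigma_{T2})}\mu_T(\pi_1,\pi_2)$; $\Xi_T=f(\Delta(\Pi_{T1}\times\Pi_{T2}))$. The von Stengel–Forges polytope $\mathcal V_T$ is the set of nonnegative vectors $\xi$ indexed by relevant pairs with: $\xi[\varnothing,\varnothing]=1$; $\sum_{a\in A_{I}}\xi[(I,a),\sigma_{T2}]=\xi[\sigma(I),\sigma_{T2}]$ for all $I\in\mathcal I_{T1}$, $\sigma_{T2}\in\Sigma_{T2}$ with $I\bowtie\sigma_{T2}$; $\sum_{b\in A_{J}}\xi[\sigma_{T1},(J,b)]=\xi[\sigma_{T1},\sigma(J)]$ for all $J\in\mathcal I_{T2}$, $\sigma_{T1}\in\Sigma_{T1}$ with $\sigma_{T1}\bowtie J$. The semi-randomized correlation plans are $\Xi^*_{T1}=\{\xi\in\mathcal V_T:\xi[\varnothing,\sigma_{T2}]\in\{0,1\}\ \forall\sigma_{T2}\in\Sigma_{T2}\}$ and $\Xi^*_{T2}=\{\xi\in\mathcal V_T:\xi[\sigma_{T1},\varnothing]\in\{0,1\}\ \forall\sigma_{T1}\in\Sigma_{T1}\}$. *)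

From HB Require Import structures.
From mathcomp Require Import all_boot all_order all_algebra.
From mathcomp Require Import reals.
Set Implicit Arguments. Unset Strict Implicit. Unset Printing Implicit Defensive.
Import Order.TTheory GRing.Theory Num.Theory.
Local Open Scope ring_scope.

Inductive player := T1 | T2 | O.

Definition player_eqb (a b : player) : bool :=
  match a, b with T1, T1 | T2, T2 | O, O => true | _, _ => false end.
Lemma player_eqP : Equality.axiom player_eqb.
Proof. by case; case; constructor. Qed.
HB.instance Definition _ := hasDecEq.Build player player_eqP.

(* Payoffs and chance probabilities are
   omitted: none of the objects in the statement depend on them.
   - [parent v] : parent of node v (None for the root);
   - [lab v]    : label of the edge from [parent v] to v (the action played,
                  when the parent is a decision node);
   - [info v]   : Some X if v is a decision node in information set X,
                  None if v is a chance node or a terminal node;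
   - [owner X]  : the player acting at X;  [acts X] : the action set A_I. *)
Record efg := EFG {
  node : finType;
  infoset : finType;
  action : finType;
  parent : node -> option node;
  lab : node -> action;
  info : node -> option infoset;
  owner : infoset -> player;
  acts : infoset -> {set action}
}.

Section Game.
Variable G : efg.
Local Notation V := (node G).
Local Notation Inf := (infoset G).
Local Notation Act := (action G).

Fixpoint up (n : nat) (v : V) : seq (V * V) :=
  match n with
  | 0 => [::]
  | n'.+1 => if parent v is Some u then rcons (up n' u) (u, v) else [::]
  end.
Definition path_to (v : V) : seq (V * V) := up #|V| v.
Definition anc (v : V) : seq V := [seq p.1 | p <- path_to v].

Definition ownseq (i : player) (v : V) : seq (Inf * Act) :=
  pmap (fun p : V * V => if info p.1 is Some X then
          (if owner X == i then Some (X, lab p.2) else None) else None)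
       (path_to v).

Definition wf_game : Prop :=
  (exists r : V, parent r = None /\ forall v, parent v = None -> v = r) /\
  (exists d : V -> nat, forall v u, parent v = Some u -> d v = (d u).+1) /\
  (forall X : Inf, exists v, info v = Some X) /\
  (forall X : Inf, acts X != set0) /\
  (forall (v : V) (X : Inf), info v = Some X ->
     (forall w, parent w = Some v -> lab w \in acts X) /\
     (forall a, a \in acts X -> exists! w, parent w = Some v /\ lab w = a)) /\
  (* perfect recall *)
  (forall v w X, info v = Some X -> info w = Some X ->
     ownseq (owner X) v = ownseq (owner X) w).

(* the sequence of own pairs leading to information set X (well defined
   by perfect recall; computed at some node of X) *)
Definition iseq (X : Inf) : seq (Inf * Act) :=
  if [pick v | info v == Some X] is Some v then ownseq (owner X) v else [::].

(* sequences: None stands for the empty sequence *)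
Definition sq := option (Inf * Act).
Definition isSeq (i : player) (s : sq) : bool :=
  if s is Some (X, a) then (owner X == i) && (a \in acts X) else true.

Definition sigmaI (X : Inf) : sq := last None [seq Some p | p <- iseq X].

Definition connected (X J : Inf) : bool :=
  [exists v : V, exists w : V,
     [&& info v == Some X, info w == Some J & (w \in anc v) || (v \in anc w)]].

Definition relevant (s1 s2 : sq) : bool :=
  [&& isSeq T1 s1, isSeq T2 s2 &
      match s1, s2 with Some (X, _), Some (J, _) => connected X J
                      | _, _ => true end].

Definition rel_si (s : sq) (J : Inf) : bool :=
  if s is Some (X, _) then connected X J else true.

Definition prescribes (pln : {ffun Inf -> option Act}) (p : Inf * Act) : bool :=
  pln p.1 == Some p.2.
Definition reachable (pln : {ffun Inf -> option Act}) (X : Inf) : bool :=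
  all (prescribes pln) (iseq X).
Definition isPlan (i : player) (pln : {ffun Inf -> option Act}) : bool :=
  [forall X, if (owner X == i) && reachable pln X
             then (if pln X is Some a then a \in acts X else false)
             else pln X == None].
Definition plan (i : player) := {pln : {ffun Inf -> option Act} | isPlan i pln}.

Definition inPi (i : player) (s : sq) (pln : plan i) : bool :=
  if s is Some (X, a) then (val pln X == Some a) && reachable (val pln) X
  else true.

Definition RP := {x : sq * sq | relevant x.1 x.2}.

Definition at_ (R : realType) (xi : {ffun RP -> R}) (s1 s2 : sq) : R :=
  if @insub _ (fun x : sq * sq => relevant x.1 x.2) RP (s1, s2) is Some k
  then xi k else 0.

Definition fmap (R : realType) (mu : {ffun plan T1 * plan T2 -> R}) : {ffun RP -> R} :=
  [ffun k : RP => \sum_(p : plan T1 * plan T2 |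
                        inPi (val k).1 p.1 && inPi (val k).2 p.2) mu p].

Definition XiT (R : realType) (xi : {ffun RP -> R}) : Prop :=
  exists mu : {ffun plan T1 * plan T2 -> R},
    (forall p, 0 <= mu p) /\ \sum_p mu p = 1 /\ xi = fmap mu.

Definition VT (R : realType) (xi : {ffun RP -> R}) : Prop :=
  (forall k, 0 <= xi k) /\
  at_ xi None None = 1 /\
  (forall (X : Inf) (s2 : sq), owner X = T1 -> isSeq T2 s2 -> rel_si s2 X ->
     \sum_(a in acts X) at_ xi (Some (X, a)) s2 = at_ xi (sigmaI X) s2) /\
  (forall (J : Inf) (s1 : sq), owner J = T2 -> isSeq T1 s1 -> rel_si s1 J ->
     \sum_(b in acts J) at_ xi s1 (Some (J, b)) = at_ xi s1 (sigmaI J)).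

Definition XiStar1 (R : realType) (xi : {ffun RP -> R}) : Prop :=
  VT xi /\ forall s2, isSeq T2 s2 -> at_ xi None s2 = 0 \/ at_ xi None s2 = 1.
Definition XiStar2 (R : realType) (xi : {ffun RP -> R}) : Prop :=
  VT xi /\ forall s1, isSeq T1 s1 -> at_ xi s1 None = 0 \/ at_ xi s1 None = 1.

End Game.

Definition co (R : realType) (M : lmodType R) (S : M -> Prop) (x : M) : Prop :=
  exists (n : nat) (w : 'I_n -> R) (y : 'I_n -> M),
    (forall j, 0 <= w j) /\ \sum_j w j = 1 /\ (forall j, S (y j)) /\
    x = \sum_j w j *: y j.

Definition set_eq (T : Type) (A B : T -> Prop) : Prop := forall x, A x <-> B x.

From HB Require Import structures.
From mathcomp Require Import all_boot all_order all_algebra.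
From mathcomp Require Import reals.
Set Implicit Arguments. Unset Strict Implicit. Unset Printing Implicit Defensive.
Import Order.TTheory GRing.Theory Num.Theory.

(* Every pure plan profile (pi1, pi2) is mapped by f to the product of the
   indicators of pi1 and pi2, which is semi-randomized for both team members;
   since f is linear, Xi_T lies in the convex hull of Xi*_T1 /\ Xi*_T2.
   Conversely Xi_T is convex, so it remains to show Xi*_Ti <= Xi_T.  The rows
   and columns of a vector xi of V_T are sequence-form flows of one player.
   If xi is in Xi*_T1, its column marginal xi[empty, .] is a 0/1-valued flow,
   hence the indicator of a plan pi2; bounding entries by marginals and walking
   down pi2 gives xi[s1, s2] = xi[s1, empty] * xi[empty, s2].  Finally, a
   product of two realization plans lies in Xi_T: decompose each factor into
   plans (Kuhn) and take the product distribution. *)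

Section Game.
Variable G : efg.
Hypothesis wf : wf_game G.
Local Notation V := (node G).
Local Notation Inf := (infoset G).
Local Notation Act := (action G).

(* Well-founded induction along the parent relation (the depth decreases). *)
Lemma tree_ind (P : V -> Prop) :
  (forall v, (forall u, parent v = Some u -> P u) -> P v) -> forall v, P v.
Proof.
move=> IH v; have [_ [[d hd] _]] := wf.
suff H : forall n v, d v < n -> P v by exact: (H _ v (ltnSn _)).
elim=> [//|n IHn] {}v hv; apply: IH => u hu; apply: IHn.
by move: hv; rewrite (hd _ _ hu) ltnS.
Qed.

Fixpoint ancestor (k : nat) (v : V) : option V :=
  if k is k'.+1 then (if parent v is Some u then ancestor k' u else None)
  else Some v.

Lemma ancestor_le k (v w : V) : ancestor k v = Some w ->
  forall m, m <= k -> exists w', ancestor m v = Some w'.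
Proof.
elim: k v w => [|k IH] v w /=; first by move=> _ [|m] // _; exists v.
case hp: (parent v) => [u|] // h [|m] hm; first by exists v.
by have [w' hw'] := IH _ _ h m hm; exists w'; rewrite /= hp.
Qed.

(* The depths of the ancestors of v are pairwise distinct, so v has fewer
   than #|V| ancestors: the #|V|-th ancestor never exists. *)
Lemma ancestor_card (v : V) : ancestor #|V| v = None.
Proof.
have [_ [[d hd] _]] := wf.
have depth k : forall u w, ancestor k u = Some w -> d u = d w + k.
  elim: k => [|k IH] u w /=; first by case=> ->; rewrite addn0.
  by case hp: (parent u) => [x|] // /IH e; rewrite (hd _ _ hp) e addnS.
case h: (ancestor #|V| v) => [w|] //; exfalso.
pose f (i : 'I_#|V|.+1) := odflt v (ancestor i v).
have hf (i : 'I_#|V|.+1) : ancestor i v = Some (f i).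
  by have [w' hw'] := ancestor_le h (ltn_ord i); rewrite /f hw'.
have inj_f : injective f.
  move=> i j e; apply: val_inj; apply/eqP.
  have := depth _ _ _ (hf j); rewrite -e (depth _ _ _ (hf i)) => /eqP.
  by rewrite eqn_add2l.
by have := leq_card f inj_f; rewrite card_ord ltnn.
Qed.

Lemma up_stable n m (v : V) : n <= m -> ancestor n v = None -> up n v = up m v.
Proof.
elim: n m v => [|n IH] [|m] v //= hnm.
by case hp: (parent v) => [u|] // h; rewrite (IH m u hnm h).
Qed.

Lemma path_to_parent (v u : V) :
  parent v = Some u -> path_to v = rcons (path_to u) (u, v).
Proof.
move=> hp; rewrite /path_to; have := ancestor_card v.
have : 0 < #|V| by apply/card_gt0P; exists v.
case: #|V| => [//|N] _ /=; rewrite hp => h.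
by rewrite (up_stable (leqnSn N) h).
Qed.

Lemma path_to_root (v : V) : parent v = None -> path_to v = [::].
Proof.
move=> hp; rewrite /path_to; have : 0 < #|V| by apply/card_gt0P; exists v.
by case: #|V| => [//|N] _ /=; rewrite hp.
Qed.

Lemma anc_parent (v u : V) : parent v = Some u -> anc v = rcons (anc u) u.
Proof. by move=> hp; rewrite /anc (path_to_parent hp) map_rcons. Qed.

Lemma anc_root (v : V) : parent v = None -> anc v = [::].
Proof. by move=> hp; rewrite /anc (path_to_root hp). Qed.

Lemma anc_trans (u v w : V) : u \in anc v -> v \in anc w -> u \in anc w.
Proof.
move=> huv; elim/tree_ind: w => w IH.
case hp: (parent w) => [p|]; last by rewrite anc_root.
rewrite (anc_parent hp) !mem_rcons !in_cons => /orP[/eqP <-|/(IH p hp) ->].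
  by rewrite huv orbT.
by rewrite orbT.
Qed.

Lemma anc_total (a b v : V) : a \in anc v -> b \in anc v ->
  [\/ a = b, a \in anc b | b \in anc a].
Proof.
elim/tree_ind: v => v IH.
case hp: (parent v) => [p|]; last by rewrite anc_root.
rewrite (anc_parent hp) !mem_rcons !in_cons.
case/orP=> [/eqP ->|ha]; case/orP=> [/eqP ->|hb].
- by constructor 1.
- by constructor 3.
- by constructor 2.
- exact: IH hp ha hb.
Qed.

Lemma ownseq_parent i (v u : V) : parent v = Some u ->
  ownseq i v = ownseq i u ++
    (if info u is Some X then (if owner X == i then [:: (X, lab v)] else [::])
     else [::]).
Proof.
move=> hp; rewrite /ownseq (path_to_parent hp) -cats1 pmap_cat /=.
by case: (info u) => // X; case: (owner X == i).
Qed.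

Lemma ownseq_root i (v : V) : parent v = None -> ownseq i v = [::].
Proof. by move=> hp; rewrite /ownseq (path_to_root hp). Qed.

Lemma ownseq_last i (v : V) s (X : Inf) (a : Act) : ownseq i v = rcons s (X, a) ->
  exists u w, [/\ u \in anc v, info u = Some X, owner X = i, ownseq i u = s &
                  parent w = Some u /\ lab w = a].
Proof.
elim/tree_ind: v s => v IH s.
case hp: (parent v) => [p|]; last by rewrite ownseq_root //; case: s.
have ancS x : x \in anc p -> x \in anc v.
  by move=> hx; rewrite (anc_parent hp) mem_rcons in_cons hx orbT.
have rec : ownseq i p = rcons s (X, a) -> exists u w, [/\ u \in anc v,
    info u = Some X, owner X = i, ownseq i u = s & parent w = Some u /\ lab w = a].
  by move=> /IH [//|u [w [? ? ? ? ?]]]; exists u, w; split=> //; apply: ancS.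
rewrite (ownseq_parent _ hp).
case hi: (info p) => [Y|]; last by rewrite cats0.
case: eqP => hY; last by rewrite cats0.
rewrite cats1 => /rcons_inj [<- <- <-]; exists p, v; split=> //.
by rewrite (anc_parent hp) mem_rcons mem_head.
Qed.

(* Perfect recall: iseq X is the own history of the owner at any node of X. *)
Lemma iseq_node (v : V) (X : Inf) : info v = Some X -> iseq X = ownseq (owner X) v.
Proof.
have [_ [_ [_ [_ [_ hpr]]]]] := wf.
move=> hv; rewrite /iseq; case: pickP => [w /eqP hw|/(_ v)]; first exact: hpr hw hv.
by rewrite hv eqxx.
Qed.

Lemma sigmaI_spec (X : Inf) : (sigmaI X = None /\ iseq X = [::]) \/
  exists X' a', [/\ sigmaI X = Some (X', a'), iseq X = rcons (iseq X') (X', a'),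
                   owner X' = owner X & a' \in acts X'].
Proof.
have [_ [_ [hinfo [_ [hchild _]]]]] := wf.
have [v hv] := hinfo X.
move: (iseq_node hv); rewrite /sigmaI.
case/lastP: (iseq X) => [|s [X' a']] E; first by left.
right; exists X', a'; rewrite map_rcons last_rcons.
have [u [w [_ hu ho hs [hw hl]]]] := ownseq_last (esym E).
split=> //; first by rewrite (iseq_node hu) ho hs.
by rewrite -hl; apply: (hchild u X' hu).1.
Qed.

Lemma sigmaI_Some (X X' : Inf) a' : sigmaI X = Some (X', a') ->
  [/\ iseq X = rcons (iseq X') (X', a'), owner X' = owner X & a' \in acts X'].
Proof.
by case: (sigmaI_spec X) => [[-> //]|[X'' [a'' [-> ? ? ?]]]] [<- <-].
Qed.

(* Induction on information sets along sigma (the history gets shorter). *)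
Lemma inf_ind (P : Inf -> Prop) :
  (forall X, (forall X' a', sigmaI X = Some (X', a') -> P X') -> P X) ->
  forall X, P X.
Proof.
move=> IH X.
suff H : forall n X, size (iseq X) < n -> P X by exact: (H _ X (ltnSn _)).
elim=> [//|n IHn] {}X hX; apply: IH => X' a' /sigmaI_Some [e _ _]; apply: IHn.
by move: hX; rewrite e size_rcons ltnS.
Qed.

Lemma connected_sym (X J : Inf) : connected X J = connected J X.
Proof.
by apply/existsP/existsP => -[v /existsP [w /and3P [h1 h2 h3]]];
  exists w; apply/existsP; exists v; rewrite h1 h2 orbC.
Qed.

Lemma connected_up (X J X' : Inf) a' : owner X != owner J -> connected X J ->
  sigmaI X = Some (X', a') -> connected X' J.
Proof.
move=> hown /existsP [v /existsP [w /and3P [/eqP hv /eqP hw hvw]]] E.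
have [e ho _] := sigmaI_Some E.
have := iseq_node hv; rewrite e => /esym/ownseq_last [u [_ [hu hu' _ _ _]]].
apply/existsP; exists u; apply/existsP; exists w; rewrite hu' hw !eqxx /=.
case/orP: hvw => [hwv|hvw]; last by rewrite (anc_trans hu hvw) orbT.
case: (anc_total hu hwv) => [euw|->|->]; rewrite ?orbT //.
by move: hu'; rewrite euw hw => -[eJ]; move: hown; rewrite eJ ho eqxx.
Qed.

Lemma rel_si_up i j (s : sq G) (X X' : Inf) a' : isSeq j s -> owner X = i ->
  i != j -> rel_si s X -> sigmaI X = Some (X', a') -> rel_si s X'.
Proof.
case: s => [[J b]|] //= /andP [/eqP hJ _] hX hij hc E.
rewrite connected_sym; apply: (connected_up _ _ E); last by rewrite connected_sym.
by rewrite hX hJ.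
Qed.

Lemma reachable_sigmaI i (pln : plan G i) (X : Inf) :
  reachable (val pln) X = inPi (sigmaI X) pln.
Proof.
case: (sigmaI_spec X) => [[-> e]|[X' [a' [-> e _ _]]]]; first by rewrite /reachable e.
by rewrite /reachable e all_rcons /= andbC.
Qed.

Lemma plan_acts i (pln : plan G i) (X : Inf) : owner X = i -> reachable (val pln) X ->
  exists2 a, val pln X = Some a & a \in acts X.
Proof.
move=> ho hr; have /forallP/(_ X) := valP pln.
by rewrite ho eqxx hr /=; case: (val pln X) => [a ha|//]; exists a.
Qed.

Lemma inPi_isSeq i (pln : plan G i) s : inPi s pln -> isSeq i s.
Proof.
case: s => [[X a]|] //= /andP [/eqP e hr]; have /forallP/(_ X) := valP pln.
by rewrite e hr andbT; case: (owner X == i).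
Qed.

Lemma inPi_other i (pln : plan G i) (X : Inf) a b :
  val pln X = Some a -> b != a -> ~~ inPi (Some (X, b)) pln.
Proof. by move=> e nba; rewrite /inPi e (inj_eq (@Some_inj _)) eq_sym (negbTE nba). Qed.

Section Flows.
Variable R : realType.
Local Open Scope ring_scope.

(* A flow of player i restricted to the information sets satisfying [rel]
   (an upward closed family): nonnegative values on sequences of i, and the
   sequence-form constraints at every information set of i in [rel].  Rows
   and columns of a vector in the von Stengel--Forges polytope are of this
   form. *)
Section RestrictedFlow.
Variables (i : player) (rel : pred Inf) (y : sq G -> R).
Hypothesis rel_up : forall X X' a',
  owner X = i -> rel X -> sigmaI X = Some (X', a') -> rel X'.
Hypothesis y_ge0 : forall s, isSeq i s -> 0 <= y s.
Hypothesis y_flow : forall X, owner X = i -> rel X ->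
  \sum_(a in acts X) y (Some (X, a)) = y (sigmaI X).

Lemma flow_le_root X a : owner X = i -> rel X -> a \in acts X ->
  y (Some (X, a)) <= y None.
Proof.
elim/inf_ind: X a => X IH a ho hX ha.
have le_sigma : y (Some (X, a)) <= y (sigmaI X).
  rewrite -y_flow // (bigD1 a) //= lerDl sumr_ge0 // => b /andP [hb _].
  by apply: y_ge0; rewrite /= ho eqxx.
apply: (le_trans le_sigma); case E: (sigmaI X) => [[X' a']|] //.
have [_ ho' ha'] := sigmaI_Some E.
by apply: (IH _ _ E) => //; [rewrite ho' | exact: rel_up E].
Qed.

Lemma flow_on_plan (pln : plan G i) :
  (forall X b, owner X = i -> rel X -> b \in acts X ->
     ~~ inPi (Some (X, b)) pln -> y (Some (X, b)) = 0) ->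
  forall X a, rel X -> inPi (Some (X, a)) pln -> y (Some (X, a)) = y None.
Proof.
move=> y_off; elim/inf_ind => X IH a hX hin.
have /andP [/eqP ho ha] := inPi_isSeq hin.
move: hin => /andP [/eqP hXa hreach].
have -> : y (Some (X, a)) = y (sigmaI X).
  rewrite -y_flow // (bigD1 a) //= big1 ?addr0 // => b /andP [hb nba].
  exact: y_off (inPi_other hXa nba).
move: hreach; rewrite reachable_sigmaI; case E: (sigmaI X) => [[X' a']|] // hin'.
by apply: (IH _ _ E) => //; apply: rel_up E.
Qed.

End RestrictedFlow.

Lemma sum_indicator (T : finType) (P : pred T) (q : T) :
  \sum_(p | P p) ((p == q)%:R : R) = (P q)%:R.
Proof.
rewrite big_mkcond (bigD1 q) //= eqxx big1 => [|p /negbTE npq].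
  by case: (P q); rewrite /= addr0.
by rewrite npq; case: (P p).
Qed.

Definition flow (i : player) (y : sq G -> R) : Prop :=
  (forall s, isSeq i s -> 0 <= y s) /\
  (forall X, owner X = i -> \sum_(a in acts X) y (Some (X, a)) = y (sigmaI X)).

Definition ind i (pln : plan G i) (s : sq G) : R := (inPi s pln)%:R.

Lemma ind_flow i (pln : plan G i) : flow i (ind pln).
Proof.
split=> [s _|X ho]; first exact: ler0n.
rewrite /ind -reachable_sigmaI /inPi.
have [hr|hr] := boolP (reachable (val pln) X); last first.
  by rewrite big1 // => a _; rewrite andbF.
have [a0 e ha0] := plan_acts ho hr.
rewrite (bigD1 a0) // e eqxx big1 /= ?addr0 // => a /andP [_ na].
by rewrite andbT (inj_eq (@Some_inj _)) eq_sym (negbTE na).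
Qed.

Lemma flow_root0 i y : flow i y -> y None = 0 -> forall s, isSeq i s -> y s = 0.
Proof.
move=> [y_ge0 y_flow] y0 [[X a]|] //= /andP [/eqP ho ha].
apply/eqP; rewrite eq_le (y_ge0 (Some (X, a))) /= ?ho ?eqxx ?ha // andbT -y0.
by apply: (flow_le_root (rel := predT) _ y_ge0) => // X' hX' _; exact: y_flow.
Qed.

Definition choose_pos (y : sq G -> R) (X : Inf) : option Act :=
  if [pick a in acts X | 0 < y (Some (X, a))] is Some a then Some a
  else [pick a in acts X].
Definition follows (y : sq G -> R) (X : Inf) : bool :=
  all (fun p => choose_pos y p.1 == Some p.2) (iseq X).
Definition support_plan i (y : sq G -> R) : {ffun Inf -> option Act} :=
  [ffun X => if (owner X == i) && follows y X then choose_pos y X else None].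

(* Action sets are nonempty, so [choose_pos] always picks a legal action. *)
Lemma choose_pos_acts y X : exists2 a, choose_pos y X = Some a & a \in acts X.
Proof.
have [_ [_ [_ [acts_nonempty _]]]] := wf.
rewrite /choose_pos; case: pickP => [a /andP [ha _]|_]; first by exists a.
case: pickP => [a ha|none]; first by exists a.
by have /set0Pn [a ha] := acts_nonempty X; move: (none a); rewrite ha.
Qed.

Lemma choose_pos_gt0 i y X a : flow i y -> owner X = i ->
  choose_pos y X = Some a -> 0 < y (sigmaI X) -> 0 < y (Some (X, a)).
Proof.
move=> [y_ge0 y_flow] ho; rewrite /choose_pos.
case: pickP => [b /andP [_ hpos] [<-] //|none _].
rewrite -(y_flow X ho) ltNge => /negP[]; apply: sumr_le0 => b hb.
by move: (none b); rewrite hb /= => /negbT; rewrite -leNgt.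
Qed.

(* [support_plan] reaches exactly the information sets whose history it
   follows, so it is a reduced-normal-form plan. *)
Lemma support_plan_reachable i y X : owner X = i ->
  reachable (support_plan i y) X = follows y X.
Proof.
elim/inf_ind: X => X IH ho.
case: (sigmaI_spec X) => [[_ e]|[X' [a' [E e ho' _]]]].
  by rewrite /reachable /follows e.
rewrite /reachable /follows e !all_rcons /= -/(reachable _ X') -/(follows y X').
rewrite (IH X' a' E) ?ho' // /prescribes /= ffunE ho' ho eqxx /=.
by case: (follows y X') => //=; rewrite andbF.
Qed.

Lemma support_planP i y : isPlan i (support_plan i y).
Proof.
apply/forallP => X; rewrite ffunE; case: (owner X =P i) => //= ho.
rewrite support_plan_reachable //; case: (follows y X) => //=.
by have [a -> ha] := choose_pos_acts y X.
Qed.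

Lemma follows_gt0 i y X : flow i y -> 0 < y None -> owner X = i -> follows y X ->
  0 < y (sigmaI X).
Proof.
move=> hy y0; elim/inf_ind: X => X IH ho.
case: (sigmaI_spec X) => [[-> _ //]|[X' [a' [E e ho' _]]]].
rewrite /follows e all_rcons /= -/(follows y X') => /andP [/eqP hc hf].
by rewrite E (choose_pos_gt0 hy) ?ho' // (IH X' a' E) ?ho'.
Qed.

Lemma flow_plan_pos i y : flow i y -> 0 < y None ->
  exists pln : plan G i, forall s, inPi s pln -> 0 < y s.
Proof.
move=> hy y0; exists (exist (isPlan i) _ (support_planP i y)) => -[[X a]|] //=.
rewrite ffunE; case: (boolP ((owner X == i) && follows y X)) => //= /andP [/eqP ho hf].
move=> /andP [/eqP hc _]; apply: (choose_pos_gt0 hy) => //.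
exact: (follows_gt0 hy).
Qed.

Lemma flow_indicator i y : flow i y -> y None = 1 ->
  (forall s, isSeq i s -> y s = 0 \/ y s = 1) ->
  exists pln : plan G i, forall s, isSeq i s -> y s = ind pln s.
Proof.
move=> [y_ge0 y_flow] y0 y01.
have [pln pos] := flow_plan_pos (conj y_ge0 y_flow) (ltac:(by rewrite y0 ltr01)).
have one s : inPi s pln -> y s = 1.
  by move=> hs; case: (y01 s (inPi_isSeq hs)) => // e; move: (pos s hs); rewrite e ltxx.
exists pln; move=> s hs; apply/eqP; rewrite -subr_eq0; apply/eqP; move: s hs.
apply: (flow_root0 (y := fun s => y s - ind pln s)); last by rewrite one ?subrr.
have [_ ind_eq] := ind_flow pln; split=> [s hs|X ho].
  rewrite /ind; case: (boolP (inPi s pln)) => h; first by rewrite one // subrr.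
  by rewrite subr0 y_ge0.
by rewrite sumrB y_flow // ind_eq.
Qed.

Definition flow_support i (y : sq G -> R) := [pred s : sq G | isSeq i s && (y s != 0)].

(* One peeling step: subtracting from a flow with positive root value the
   plan of [flow_plan_pos], weighted by the least flow along it, leaves a flow
   with a strictly smaller support. *)
Lemma flow_peel i y : flow i y -> 0 < y None ->
  exists (pln : plan G i) (lam : R), let y' s := y s - lam * ind pln s in
    [/\ 0 <= lam, flow i y' & (#|flow_support i y'| < #|flow_support i y|)%N].
Proof.
move=> [y_ge0 y_flow] ypos.
have [pln pos] := flow_plan_pos (conj y_ge0 y_flow) ypos.
pose s0 := [arg min_(s < None | inPi s pln) y s]%O.
have [s0_in s0_min] : inPi s0 pln /\ forall s, inPi s pln -> y s0 <= y s.
  by rewrite /s0; case: arg_minP => // s hs hmin; split=> // t /hmin.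
exists pln, (y s0) => y'; split; first exact: ltW (pos _ s0_in).
  have [_ ind_eq] := ind_flow pln; split=> [s hs|X ho].
    rewrite /y' /ind subr_ge0; case: (boolP (inPi s pln)) => h.
      by rewrite mulr1 s0_min.
    by rewrite mulr0 y_ge0.
  by rewrite sumrB -mulr_sumr y_flow // ind_eq.
apply: proper_card; apply/properP; split.
  apply/subsetP => s; rewrite !inE => /andP [hs hy']; rewrite hs /=.
  case: (boolP (inPi s pln)) => h; first by rewrite (gt_eqF (pos _ h)).
  by move: hy'; rewrite /y' /ind (negbTE h) mulr0 subr0.
exists s0; rewrite !inE (inPi_isSeq s0_in) ?(gt_eqF (pos _ s0_in)) //.
by rewrite /y' /ind s0_in mulr1 subrr eqxx.
Qed.

(* Kuhn-style decomposition: every realization plan is a nonnegative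
   combination of indicators of plans (peel plans off, by induction on the
   size of the support). *)
Lemma flow_decomp i y : flow i y ->
  exists mu : plan G i -> R, (forall p, 0 <= mu p) /\
    forall s, isSeq i s -> y s = \sum_(p | inPi s p) mu p.
Proof.
move=> hy; have [n] : exists n, (#|flow_support i y| < n)%N.
  by exists #|flow_support i y|.+1.
elim: n y hy => [|n IHn] y hy; first by rewrite ltn0.
rewrite ltnS => hcard.
have [y0|y0] := eqVneq (y None) 0.
  by exists (fun=> 0); split=> // s hs; rewrite (flow_root0 hy y0 hs) big1.
have ypos : 0 < y None by rewrite lt_def y0 hy.1.
have [pln [lam [lam_ge0 flow' card']]] := flow_peel hy ypos.
have [mu' [mu'_ge0 mu'_sum]] := IHn _ flow' (leq_trans card' hcard).
exists (fun p => mu' p + lam * (p == pln)%:R); split.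
  by move=> p; rewrite addr_ge0 ?mulr_ge0 ?ler0n.
move=> s hs; rewrite big_split /= -mulr_sumr sum_indicator.
by rewrite -(mu'_sum s hs) /ind subrK.
Qed.

End Flows.

Lemma relevant_T1E (X : Inf) a s2 : relevant (Some (X, a)) s2 =
  [&& owner X == T1, a \in acts X, isSeq T2 s2 & rel_si s2 X].
Proof. by case: s2 => [[J b]|]; rewrite /relevant /= -?andbA ?andbT // connected_sym. Qed.

Lemma relevant_T2E (J : Inf) b s1 : relevant s1 (Some (J, b)) =
  [&& isSeq T1 s1, owner J == T2, b \in acts J & rel_si s1 J].
Proof. by case: s1 => [[X a]|]; rewrite /relevant /= -?andbA ?andbT. Qed.

Lemma relevant_None_l (s2 : sq G) : relevant None s2 = isSeq T2 s2.
Proof. by rewrite /relevant andbT. Qed.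

Lemma relevant_None_r (s1 : sq G) : relevant s1 None = isSeq T1 s1.
Proof. by case: s1 => [[X a]|]; rewrite /relevant /= ?andbT. Qed.

(* Relevance passes from (X, a) to sigma(X): this makes the V_T constraints
   well posed. *)
Lemma relevant_sigmaI_T1 (X : Inf) s2 : owner X = T1 -> isSeq T2 s2 ->
  rel_si s2 X -> relevant (sigmaI X) s2.
Proof.
move=> ho hs hX; case E: (sigmaI X) => [[X' a']|]; last by rewrite relevant_None_l.
have [_ ho' ha'] := sigmaI_Some E.
by rewrite relevant_T1E ho' ho ha' hs (rel_si_up hs ho isT hX E).
Qed.

Lemma relevant_sigmaI_T2 (J : Inf) s1 : owner J = T2 -> isSeq T1 s1 ->
  rel_si s1 J -> relevant s1 (sigmaI J).
Proof.
move=> ho hs hJ; case E: (sigmaI J) => [[J' b']|].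
  have [_ ho' hb'] := sigmaI_Some E.
  by rewrite relevant_T2E ho' ho hb' hs (rel_si_up hs ho isT hJ E).
by rewrite relevant_None_r.
Qed.

Section Polytope.
Variable R : realType.
Local Open Scope ring_scope.
Implicit Types (xi : {ffun RP G -> R}) (a b : sq G -> R).

Lemma at_rel xi s1 s2 (h : relevant s1 s2) : at_ xi s1 s2 = xi (Sub (s1, s2) h).
Proof. by rewrite /at_ insubT. Qed.

Lemma at_nrel xi s1 s2 : ~~ relevant s1 s2 -> at_ xi s1 s2 = 0.
Proof. by move=> h; rewrite /at_ insubF //; apply: negbTE. Qed.

Lemma at_val xi (k : RP G) : at_ xi (val k).1 (val k).2 = xi k.
Proof. by rewrite /at_ -surjective_pairing valK. Qed.

Lemma at_ge0 xi s1 s2 : (forall k, 0 <= xi k) -> 0 <= at_ xi s1 s2.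
Proof. by move=> h; rewrite /at_; case: insub. Qed.

(* In the polytope V_T, every entry is bounded by the corresponding entries of
   the marginals xi[empty, s2] and xi[s1, empty]: rows and columns of xi are
   restricted flows. *)
Lemma row_le_marginal xi : VT xi -> forall s1 s2, at_ xi s1 s2 <= at_ xi None s2.
Proof.
move=> [xi_ge0 [_ [rows _]]] s1 s2.
have [hr|hr] := boolP (relevant s1 s2); last by rewrite at_nrel // at_ge0.
case: s1 hr => [[X a]|_]; last exact: lexx.
rewrite relevant_T1E => /and4P [/eqP ho ha hs hX].
apply: (flow_le_root (i := T1) (rel := rel_si s2) (y := fun s1 => at_ xi s1 s2)) => //.
- by move=> X0 X' a' ho0 hX0 E; apply: (rel_si_up hs ho0 isT hX0 E).
- by move=> s _; apply: at_ge0.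
- by move=> X0 ho0 hX0; apply: rows.
Qed.

Lemma col_le_marginal xi : VT xi -> forall s1 s2, at_ xi s1 s2 <= at_ xi s1 None.
Proof.
move=> [xi_ge0 [_ [_ cols]]] s1 s2.
have [hr|hr] := boolP (relevant s1 s2); last by rewrite at_nrel // at_ge0.
case: s2 hr => [[J b]|_]; last exact: lexx.
rewrite relevant_T2E => /and4P [hs /eqP ho hb hJ].
apply: (flow_le_root (i := T2) (rel := rel_si s1) (y := fun s2 => at_ xi s1 s2)) => //.
- by move=> J0 J' b' ho0 hJ0 E; apply: (rel_si_up hs ho0 isT hJ0 E).
- by move=> s _; apply: at_ge0.
- by move=> J0 ho0 hJ0; apply: cols.
Qed.

Lemma VT_marginals xi : VT xi ->
  flow T1 (fun s1 => at_ xi s1 None) /\ flow T2 (fun s2 => at_ xi None s2).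
Proof.
move=> [xi_ge0 [_ [rows cols]]].
by split; split=> [s _|X ho]; rewrite ?at_ge0 // ?rows ?cols.
Qed.

Lemma factor_col xi (pi2 : plan G T2) : VT xi ->
  (forall s2, isSeq T2 s2 -> at_ xi None s2 = ind R pi2 s2) ->
  forall s1 s2, relevant s1 s2 -> at_ xi s1 s2 = at_ xi s1 None * at_ xi None s2.
Proof.
move=> hV col0 s1 s2 hr; have hs2 : isSeq T2 s2 by case/and3P: hr.
have vanish s : isSeq T2 s -> ~~ inPi s pi2 -> at_ xi s1 s = 0.
  move=> hs off; apply/eqP; rewrite eq_le at_ge0 ?andbT; last by case: hV.
  by have := row_le_marginal hV s1 s; rewrite col0 // /ind (negbTE off).
rewrite col0 // /ind; case: (boolP (inPi s2 pi2)) => hin; last by rewrite vanish ?mulr0.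
rewrite mulr1; case: s2 hr {hs2} hin => [[J b]|_ _] //.
rewrite relevant_T2E => /and4P [hs1 /eqP ho hb hJ]; have [xi_ge0 [_ [_ cols]]] := hV.
apply: (flow_on_plan (i := T2) (rel := rel_si s1) (y := fun s2 => at_ xi s1 s2)) => //.
- by move=> J0 J' b' ho0 hJ0 E; apply: (rel_si_up hs1 ho0 isT hJ0 E).
- by move=> J0 ho0 hJ0; apply: cols.
- by move=> J0 b0 ho0 _ hb0; apply: vanish; rewrite /= ho0 eqxx.
Qed.

Lemma factor_row xi (pi1 : plan G T1) : VT xi ->
  (forall s1, isSeq T1 s1 -> at_ xi s1 None = ind R pi1 s1) ->
  forall s1 s2, relevant s1 s2 -> at_ xi s1 s2 = at_ xi s1 None * at_ xi None s2.
Proof.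
move=> hV row0 s1 s2 hr; have hs1 : isSeq T1 s1 by case/and3P: hr.
have vanish s : isSeq T1 s -> ~~ inPi s pi1 -> at_ xi s s2 = 0.
  move=> hs off; apply/eqP; rewrite eq_le at_ge0 ?andbT; last by case: hV.
  by have := col_le_marginal hV s s2; rewrite row0 // /ind (negbTE off).
rewrite row0 // /ind; case: (boolP (inPi s1 pi1)) => hin; last by rewrite vanish ?mul0r.
rewrite mul1r; case: s1 hr {hs1} hin => [[X a]|_ _] //.
rewrite relevant_T1E => /and4P [/eqP ho ha hs2 hX]; have [xi_ge0 [_ [rows _]]] := hV.
apply: (flow_on_plan (i := T1) (rel := rel_si s2) (y := fun s1 => at_ xi s1 s2)) => //.
- by move=> X0 X' a' ho0 hX0 E; apply: (rel_si_up hs2 ho0 isT hX0 E).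
- by move=> X0 ho0 hX0; apply: rows.
- by move=> X0 a0 ho0 _ ha0; apply: vanish; rewrite /= ho0 eqxx.
Qed.


Definition xprod a b : {ffun RP G -> R} := [ffun k => a (val k).1 * b (val k).2].

Lemma at_xprod a b s1 s2 : relevant s1 s2 -> at_ (xprod a b) s1 s2 = a s1 * b s2.
Proof. by move=> h; rewrite (at_rel _ h) ffunE. Qed.

Lemma factor_xprod xi :
  (forall s1 s2, relevant s1 s2 -> at_ xi s1 s2 = at_ xi s1 None * at_ xi None s2) ->
  xi = xprod (fun s1 => at_ xi s1 None) (fun s2 => at_ xi None s2).
Proof.
by move=> hfac; apply/ffunP => k; rewrite ffunE -at_val hfac //; exact: (valP k).
Qed.

Lemma xprod_VT a b : flow T1 a -> flow T2 b -> a None = 1 -> b None = 1 ->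
  VT (xprod a b).
Proof.
move=> [a_ge0 a_flow] [b_ge0 b_flow] a0 b0; split; [|split; [|split]].
- move=> k; rewrite ffunE; have /and3P [h1 h2 _] := valP k.
  by rewrite mulr_ge0 ?a_ge0 ?b_ge0.
- by rewrite at_xprod // a0 b0 mulr1.
- move=> X s2 ho hs hX; rewrite at_xprod ?relevant_sigmaI_T1 // -a_flow // mulr_suml.
  by apply: eq_bigr => x hx; rewrite at_xprod // relevant_T1E ho eqxx hx hs hX.
- move=> J s1 ho hs hJ; rewrite at_xprod ?relevant_sigmaI_T2 // -b_flow // mulr_sumr.
  by apply: eq_bigr => x hx; rewrite at_xprod // relevant_T2E ho eqxx hx hs hJ.
Qed.

(* ... and even in Xi_T: decompose both factors into plans (Kuhn) and take
   the product distribution. *)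
Lemma xprod_XiT a b : flow T1 a -> flow T2 b -> a None = 1 -> b None = 1 ->
  XiT (xprod a b).
Proof.
move=> ha hb a0 b0.
have [mu1 [mu1_ge0 a_sum]] := flow_decomp ha.
have [mu2 [mu2_ge0 b_sum]] := flow_decomp hb.
have sum_prod (P1 : pred (plan G T1)) (P2 : pred (plan G T2)) :
    \sum_(p : plan G T1 * plan G T2 | P1 p.1 && P2 p.2) mu1 p.1 * mu2 p.2 =
    (\sum_(p1 | P1 p1) mu1 p1) * (\sum_(p2 | P2 p2) mu2 p2).
  by rewrite big_distrlr pair_big_dep.
exists [ffun p => mu1 p.1 * mu2 p.2]; split; [|split].
- by move=> p; rewrite ffunE mulr_ge0.
- under eq_bigr do rewrite ffunE.
  transitivity (a None * b None); last by rewrite a0 b0 mulr1.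
  by rewrite (a_sum None) // (b_sum None) // -sum_prod.
- apply/ffunP => k; rewrite !ffunE; under eq_bigr do rewrite ffunE.
  have /and3P [h1 h2 _] := valP k.
  by rewrite sum_prod -a_sum // -b_sum.
Qed.

(* Semi-randomized correlation plans are in Xi_T: one marginal is the
   indicator of a plan, so the vector factorizes through its marginals. *)
Lemma XiStar1_XiT xi : XiStar1 xi -> XiT xi.
Proof.
move=> [hV col01]; have [row_flow col_flow] := VT_marginals hV.
have [_ [xi00 _]] := hV.
have [pi2 col_ind] := flow_indicator col_flow xi00 col01.
by rewrite (factor_xprod (factor_col hV col_ind)); apply: xprod_XiT.
Qed.

Lemma XiStar2_XiT xi : XiStar2 xi -> XiT xi.
Proof.
move=> [hV row01]; have [row_flow col_flow] := VT_marginals hV.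
have [_ [xi00 _]] := hV.
have [pi1 row_ind] := flow_indicator row_flow xi00 row01.
by rewrite (factor_xprod (factor_row hV row_ind)); apply: xprod_XiT.
Qed.

Local Notation M := {ffun RP G -> R^o}.

Lemma xprod_ind_star (q : plan G T1 * plan G T2) :
  XiStar1 (xprod (ind R q.1) (ind R q.2)) /\ XiStar2 (xprod (ind R q.1) (ind R q.2)).
Proof.
have hV := xprod_VT (ind_flow R q.1) (ind_flow R q.2) erefl erefl.
split; split=> // s hs.
- rewrite at_xprod ?relevant_None_l // /ind mul1r.
  by case: (inPi s q.2); [right|left].
- rewrite at_xprod ?relevant_None_r // /ind mulr1.
  by case: (inPi s q.1); [right|left].
Qed.

Lemma fmap_combination (mu : {ffun plan G T1 * plan G T2 -> R}) :
  (fmap mu : M) = \sum_p mu p *: (xprod (ind R p.1) (ind R p.2) : M).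
Proof.
apply/ffunP => k; rewrite sum_ffunE ffunE big_mkcond /=; apply: eq_bigr => p _.
rewrite !ffunE /ind; case: (inPi _ p.1); case: (inPi _ p.2);
  rewrite /= ?mulr1 ?mulr0 ?scaler0 //.
exact: (esym (mulr1 _)).
Qed.

Lemma XiT_co_star x : XiT x -> co (M := M) (fun xi => XiStar1 xi /\ XiStar2 xi) x.
Proof.
move=> [mu [mu_ge0 [mu_sum ->]]].
exists #|{: plan G T1 * plan G T2}|, (fun j => mu (enum_val j)),
  (fun j => xprod (ind R (enum_val j).1) (ind R (enum_val j).2) : M).
split; [|split; [|split]].
- by move=> j; apply: mu_ge0.
- by rewrite -mu_sum -(big_enum_val (A := {: _}) mu); apply: eq_bigl => p; rewrite inE.
- by move=> j; apply: xprod_ind_star.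
- rewrite fmap_combination -(big_enum_val (A := {: _})
    (fun p => mu p *: (xprod (ind R p.1) (ind R p.2) : M))).
  by apply: eq_bigl => p; rewrite inE.
Qed.

Lemma co_XiT (S : M -> Prop) : (forall xi, S xi -> XiT xi) -> forall x, co S x -> XiT x.
Proof.
move=> hS x [n [w [y [w_ge0 [w_sum [hy ->]]]]]].
have [mus hmus] := fin_all_exists (fun j => hS _ (hy j)).
exists [ffun p => \sum_j w j * mus j p]; split; [|split].
- move=> p; rewrite ffunE; apply: sumr_ge0 => j _; apply: mulr_ge0 => //.
  exact: (hmus j).1.
- under eq_bigr do rewrite ffunE.
  rewrite exchange_big /= -w_sum; apply: eq_bigr => j _.
  by rewrite -mulr_sumr (hmus j).2.1 mulr1.
- apply/ffunP => k; rewrite sum_ffunE [in RHS]ffunE.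
  under [in RHS]eq_bigr do rewrite ffunE.
  rewrite exchange_big /=; apply: eq_bigr => j _.
  by rewrite ffunE (hmus j).2.2 ffunE -mulr_sumr.
Qed.

Lemma XiT_eq_co (S : M -> Prop) :
  (forall xi, XiStar1 xi /\ XiStar2 xi -> S xi) -> (forall xi, S xi -> XiT xi) ->
  set_eq (@XiT G R) (co S).
Proof.
move=> star_S S_XiT x; split; last exact: co_XiT.
move=> /XiT_co_star [n [w [y [w_ge0 [w_sum [hy ->]]]]]].
by exists n, w, y; split=> //; split=> //; split=> // j; apply: star_S.
Qed.

End Polytope.
End Game.

Theorem proposition3 (R : realType) (G : efg) :
  wf_game G ->
  set_eq (@XiT G R) (co (M := {ffun RP G -> R^o}) (@XiStar1 G R)) /\
  set_eq (@XiT G R) (co (M := {ffun RP G -> R^o}) (@XiStar2 G R)) /\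
  set_eq (@XiT G R)
         (co (M := {ffun RP G -> R^o}) (fun xi => @XiStar1 G R xi \/ @XiStar2 G R xi)).
Proof.
move=> wf; have star1 := XiStar1_XiT wf; have star2 := XiStar2_XiT wf.
split; [|split]; apply: (XiT_eq_co wf) => xi.
- by case.
- exact: star1.
- by case.
- exact: star2.
- by case=> ? _; left.
- by case; [apply: star1 | apply: star2].
Qed.
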